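(* Let $d_t(n)=PPL_t(n+1)-PPL_t(n)$ for $n\geq 0$. Then $d_t(n)\in\{-1,0,1\}$ for all $n$, and the sequence $(d_t(n))_{n\geq 0}$ is the fixed point (starting with $1$) of the $4$-uniform morphism $\delta$ on the alphabet $\{-1,0,1\}$ given by \[\delta(1)=(1,1,0,-1),\quad \delta(0)=(1,1,-1,-1),\quad \delta(-1)=(1,0,-1,-1);\] that is, $(d_t(4n),d_t(4n+1),d_t(4n+2),d_t(4n+3))=\delta(d_t(n))$ for all $n\geq 0$, and $d_t(0)=1$.
   Context: The Thue-Morse word $t=t[1]t[2]\cdots=abbabaabbaababba\cdots$ is the fixed point starting with $a$ of the morphism $a\mapsto abba,\ b\mapsto baab$. A palindrome is a word $p=p[1]\cdots p[n]$ with $p[i]=p[n-i+1]$ for all $i$. $PPL_t(n)$ is the minimal number of nonempty palindromes whose concatenation equals the prefix of $t$ of length $n$, with $PPL_t(0)=0$. *)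

From mathcomp Require Import all_boot all_order all_algebra.
Set Implicit Arguments. Unset Strict Implicit. Unset Printing Implicit Defensive.
Import GRing.Theory Num.Theory.

(* Letters: false = a, true = b. *)
Definition tm_morph (x : bool) : seq bool :=
  if x then [:: true; false; false; true]
  else [:: false; true; true; false].

Definition tm_iter (k : nat) : seq bool := iter k (fun w => flatten (map tm_morph w)) [:: false].

(* The i-th letter (0-indexed) of the fixed point starting with a:
   tm_iter (i.+1) has length 4^(i+1) > i and is a prefix of the fixed point. *)
Definition tm (i : nat) : bool := nth false (tm_iter i.+1) i.

(* Prefix of length n of the Thue-Morse word: t[1] ... t[n]. *)
Definition tm_prefix (n : nat) : seq bool := mkseq tm n.

Definition palindrome (w : seq bool) : bool := rev w == w.

Definition pal_factorization (s : seq bool) (ws : seq (seq bool)) : Prop :=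
  flatten ws = s /\ all (fun w => (w != [::]) && palindrome w) ws.

Fixpoint pal_k (k : nat) (s : seq bool) : bool :=
  match k with
  | 0 => s == [::]
  | k'.+1 => [exists j : 'I_(size s), palindrome (take j.+1 s) && pal_k k' (drop j.+1 s)]
  end.

Lemma pal_kP k s : reflect (exists ws, size ws = k /\ pal_factorization s ws) (pal_k k s).
Proof.
elim: k s => [|k IH] s /=.
  apply: (iffP eqP) => [->|[ws [/size0nil -> [<- _]]]]; last by [].
  by exists [::].
apply: (iffP existsP).
  case=> j /andP[pj /IH [ws [sz [fl al]]]].
  exists (take j.+1 s :: ws); split; first by rewrite /= sz.
  split; first by rewrite /= fl cat_take_drop.
  rewrite /= al andbT pj andbT -size_eq0 size_take.
  have hs : 0 < size s by apply: leq_ltn_trans (ltn_ord j).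
  case: ifP => // _; by rewrite -lt0n.
case=> [[|w ws]]; first by case.
case=> [[sz] [/= fl]] /andP[/andP[wn pw] al].
have jlt : (size w).-1 < size s.
  rewrite -fl size_cat; case: w wn {fl pw} => //= x w _; exact: leq_addr.
exists (Ordinal jlt) => /=.
have hj : (size w).-1.+1 = size w by case: w wn {fl pw jlt}.
rewrite hj -fl take_size_cat // drop_size_cat // pw /=.
by apply/IH; exists ws.
Qed.

Lemma pal_k_exists s : exists k, pal_k k s.
Proof.
exists (size s); apply/pal_kP; exists [seq [:: x] | x <- s]; split; first by rewrite size_map.
split; first by elim: s => //= x s ->.
by elim: s => //= x s ->; rewrite andbT /palindrome.
Qed.

Definition PPL (n : nat) : nat := ex_minn (pal_k_exists (tm_prefix n)).

Definition d_t (n : nat) : int := (PPL n.+1)%:Z - (PPL n)%:Z.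

Local Open Scope ring_scope.
Definition delta (x : int) : seq int :=
  if x == 1 then [:: 1; 1; 0; -1]
  else if x == 0 then [:: 1; 1; -1; -1]
  else [:: 1; 0; -1; -1].

From mathcomp Require Import all_boot all_order all_algebra.
From mathcomp Require Import zify.
Import GRing.Theory Num.Theory.

Set Implicit Arguments.
Unset Strict Implicit.
Unset Printing Implicit Defensive.

(* PPL_t coincides with the function Q given by Q 0 = 0 and
     Q (4m) = Q m,   Q (4m+1) = Q m + 1,
     Q (4m+2) = min (Q m) (Q (m+1)) + 2,   Q (4m+3) = Q (m+1) + 1,
   and the recursion for d_t is read off from these equations together with
   |Q (n+1) - Q n| <= 1.
   PPL_t <= Q: the Thue-Morse morphism maps palindromes to palindromes, hence
   a factorization of the prefix of length m to one of the prefix of length 4m,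
   and appending or deleting a last letter costs at most one palindrome.
   Q <= PPL_t: it suffices that Q b <= Q a + 1 whenever t[a..b) is a
   palindrome.  Odd palindromes of t have length 1 or 3, and those of length 3
   start at a position congruent to 2 or 3 mod 4.  An even palindrome t[a..b)
   has a + b divisible by 4, so it is the image of the palindrome
   t[a/4 .. (b+3)/4) trimmed by a mod 4 letters on each side, and the bound
   follows by induction. *)

Lemma split_mod4 n : exists q r, r < 4 /\ n = 4 * q + r.
Proof. by exists (n %/ 4), (n %% 4); split; lia. Qed.

Definition tm_subst (w : seq bool) : seq bool := flatten (map tm_morph w).

Lemma tm_subst_cons x w : tm_subst (x :: w) = tm_morph x ++ tm_subst w.
Proof. by []. Qed.

Lemma tm_subst_cat u v : tm_subst (u ++ v) = tm_subst u ++ tm_subst v.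
Proof. by rewrite /tm_subst map_cat flatten_cat. Qed.

Lemma tm_subst_flatten ws : tm_subst (flatten ws) = flatten (map tm_subst ws).
Proof. by elim: ws => [|w ws IH] //=; rewrite tm_subst_cat IH. Qed.

Lemma size_tm_subst w : size (tm_subst w) = 4 * size w.
Proof. by elim: w => [|x w IH] //; rewrite tm_subst_cons size_cat IH mulnS; case: x. Qed.

Lemma nth_tm_subst w q o : o < 4 -> q < size w ->
  nth false (tm_subst w) (4 * q + o) = nth false (tm_morph (nth false w q)) o.
Proof.
move=> lt_o4; elim: w q => [|x w IH] [|q] //= lt_q; rewrite tm_subst_cons.
  by rewrite muln0 add0n nth_cat (_ : size (tm_morph x) = 4) ?lt_o4 //; case: x.
rewrite nth_cat (_ : size (tm_morph x) = 4); last by case: x.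
rewrite ifN; last by rewrite -leqNgt; lia.
by rewrite (_ : 4 * q.+1 + o - 4 = 4 * q + o) ?IH //; lia.
Qed.

Lemma rev_tm_subst w : rev (tm_subst w) = tm_subst (rev w).
Proof.
elim: w => [|x w IH] //.
by rewrite rev_cons -cats1 tm_subst_cat -IH tm_subst_cons rev_cat; case: x.
Qed.

Lemma tm_iterS k : tm_iter k.+1 = tm_subst (tm_iter k).
Proof. by []. Qed.

Lemma size_tm_iter k : size (tm_iter k) = 4 ^ k.
Proof. by elim: k => [|k IH] //; rewrite tm_iterS size_tm_subst IH expnS. Qed.

Lemma prefix_tm_iter k k' : k <= k' -> prefix (tm_iter k) (tm_iter k').
Proof.
have prefixS j : prefix (tm_iter j) (tm_iter j.+1).
  elim: j => [|j /prefixP[r def_j]] //.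
  by rewrite [tm_iter j.+2]tm_iterS {2}def_j tm_subst_cat prefix_prefix.
elim: k' => [|k' IH]; first by rewrite leqn0 => /eqP ->; apply: prefix_refl.
rewrite leq_eqVlt ltnS => /predU1P[-> | /IH]; first exact: prefix_refl.
by move/prefix_trans; apply.
Qed.

Lemma tm_nth k i : i < 4 ^ k -> tm i = nth false (tm_iter k) i.
Proof.
have nth_iter j j' : j <= j' -> i < 4 ^ j ->
    nth false (tm_iter j) i = nth false (tm_iter j') i.
  move=> /prefix_tm_iter /prefixP[r ->] lt_i.
  by rewrite nth_cat size_tm_iter lt_i.
move=> lt_i; rewrite /tm (nth_iter k (maxn k i.+1)) ?leq_maxl //.
rewrite (nth_iter i.+1 (maxn k i.+1)) ?leq_maxr //.
by rewrite (ltn_trans (ltn_expl i (_ : 1 < 4))) // ltn_exp2l.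
Qed.

Lemma tmE q o : o < 4 -> tm (4 * q + o) = nth false (tm_morph (tm q)) o.
Proof.
move=> lt_o4; have lt_q : q < 4 ^ q by apply: ltn_expl.
rewrite (@tm_nth q.+1) ?tm_iterS ?nth_tm_subst ?size_tm_iter -?tm_nth //.
by rewrite expnS; lia.
Qed.

Lemma tm_prefix_mul4 m : tm_prefix (4 * m) = tm_subst (tm_prefix m).
Proof.
apply: (@eq_from_nth _ false); first by rewrite size_tm_subst !size_mkseq.
move=> i; rewrite size_mkseq => lt_i.
have [q [o [lt_o def_i]]] := split_mod4 i; subst i.
by rewrite nth_tm_subst ?size_mkseq ?nth_mkseq ?tmE //; lia.
Qed.

Lemma tm_half n : tm n = tm n./2 (+) odd n.
Proof.
elim/ltn_ind: n => n IH.
have [-> | n_gt0] := posnP n; first by rewrite addbF.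
have [q [o [lt_o def_n]]] := split_mod4 n; subst n.
rewrite tmE // (_ : (4 * q + o)./2 = 2 * q + o./2); last by lia.
rewrite (IH (2 * q + o./2)); last by lia.
have [-> [-> ->]] : (2 * q + o./2)./2 = q /\ odd (2 * q + o./2) = odd o./2 /\
                    odd (4 * q + o) = odd o by lia.
by case: o lt_o {n_gt0 IH} => [|[|[|[|]]]] //= _; case: (tm q).
Qed.

Lemma tm_addn_double p m : tm (p + m.*2) = tm (p./2 + m) (+) odd p.
Proof.
rewrite tm_half (_ : (p + m.*2)./2 = p./2 + m); last by lia.
by rewrite (_ : odd (p + m.*2) = odd p); last by lia.
Qed.

Lemma tm_eqS_odd n : tm n = tm n.+1 -> odd n.
Proof.
rewrite (tm_half n) (tm_half n.+1); case: (boolP (odd n)) => // even_n.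
by rewrite (_ : n.+1./2 = n./2) /= ?(negbTE even_n); [case: (tm _) | lia].
Qed.

Lemma tm_no_run3 k : tm k = tm k.+1 -> tm k.+1 = tm k.+2 -> False.
Proof. by move=> /tm_eqS_odd odd_k /tm_eqS_odd /=; rewrite odd_k. Qed.

Lemma tm_eq_add2_mod4 p : tm p = tm (p + 2) -> 2 <= p %% 4.
Proof.
rewrite [tm p]tm_half (tm_addn_double p 1) addn1 => /addIb /tm_eqS_odd; lia.
Qed.

Lemma tm_no_pal5 p : tm p = tm (p + 4) -> tm p.+1 = tm (p + 3) -> False.
Proof.
rewrite [tm p]tm_half (tm_addn_double p 2) addn2 => /addIb e02.
rewrite [tm p.+1]tm_half (_ : p + 3 = p.+1 + 1.*2) ?tm_addn_double ?addn1; last by lia.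
move=> /addIb e1.
have [half_S | half_S] : p.+1./2 = p./2 \/ p.+1./2 = p./2.+1 by lia.
- by rewrite half_S in e1; apply: (tm_no_run3 e1); rewrite -e1.
- by rewrite half_S in e1; apply: (@tm_no_run3 p./2); rewrite ?e02 ?e1.
Qed.

Definition pal_length (s : seq bool) : nat := ex_minn (pal_k_exists s).

Lemma pal_length_spec s : pal_k (pal_length s) s.
Proof. by rewrite /pal_length; case: ex_minnP. Qed.

Lemma pal_length_min k s : pal_k k s -> pal_length s <= k.
Proof. by rewrite /pal_length; case: ex_minnP => m _; apply. Qed.

Lemma pal_length_nil : pal_length [::] = 0.
Proof. by apply/eqP; rewrite -leqn0 pal_length_min. Qed.

Lemma pal_length_factorization s ws : pal_factorization s ws -> pal_length s <= size ws.
Proof. by move=> fact_ws; apply/pal_length_min/pal_kP; exists ws. Qed.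

Lemma pal_length_cat s1 s2 : pal_length (s1 ++ s2) <= pal_length s1 + pal_length s2.
Proof.
have /pal_kP[ws1 [<- [<- pal1]]] := pal_length_spec s1.
have /pal_kP[ws2 [<- [<- pal2]]] := pal_length_spec s2.
by rewrite -size_cat pal_length_factorization //; split; rewrite ?flatten_cat ?all_cat ?pal1.
Qed.

Lemma pal_length_palindrome w : palindrome w -> pal_length w <= 1.
Proof.
case: w => [|x w] pal_w; first by rewrite pal_length_nil.
by apply: (@pal_length_factorization _ [:: x :: w]); rewrite /pal_factorization /= cats0 pal_w.
Qed.

Lemma pal_length_rcons s x : pal_length (rcons s x) <= (pal_length s).+1.
Proof.
rewrite -cats1 -addn1; apply: leq_trans (pal_length_cat _ _) _.
by rewrite leq_add2l pal_length_palindrome //; apply: eqxx.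
Qed.

Lemma pal_length_belast_palindrome p x : palindrome (rcons p x) -> pal_length p <= 2.
Proof.
case: p => [|y v]; first by rewrite pal_length_nil.
rewrite /palindrome rev_rcons rev_cons => /eqP[_ /rcons_inj[rev_v _]].
rewrite -cat1s; apply: leq_trans (pal_length_cat _ _) _.
have pal_y : pal_length [:: y] <= 1 by apply: pal_length_palindrome; exact: eqxx.
have pal_v : pal_length v <= 1 by apply/pal_length_palindrome/eqP.
exact: leq_add pal_y pal_v.
Qed.

Lemma pal_length_le_rcons s x : pal_length s <= (pal_length (rcons s x)).+1.
Proof.
have /pal_kP[ws [<- [fact_s pals]]] := pal_length_spec (rcons s x).
case/lastP: ws fact_s pals => [|ws w]; first by move/(congr1 size); rewrite size_rcons.
rewrite all_rcons flatten_rcons size_rcons => + /andP[/andP[w_nonempty pal_w] pals].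
case/lastP: w w_nonempty pal_w => [|p y] // _ pal_py.
rewrite -rcons_cat => /rcons_inj[<- _]; apply: leq_trans (pal_length_cat _ _) _.
by rewrite -addn2 leq_add ?pal_length_factorization // (pal_length_belast_palindrome pal_py).
Qed.

Lemma pal_length_tm_subst s : pal_length (tm_subst s) <= pal_length s.
Proof.
have /pal_kP[ws [<- [<- pals]]] := pal_length_spec s.
rewrite -(size_map tm_subst) pal_length_factorization //; split.
  by rewrite tm_subst_flatten.
rewrite all_map; apply/allP => w /(allP pals) /andP[w_nonempty pal_w] /=.
rewrite /palindrome rev_tm_subst (eqP pal_w) eqxx andbT.
by case: w w_nonempty {pal_w} => [|[] w].
Qed.

(* [ppl_step r (Q m) (Q m.+1)] is Q (4m + r). *)
Definition ppl_step (r x y : nat) : nat :=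
  match r with 0 => x | 1 => x.+1 | 2 => (minn x y).+2 | 3 => y.+1 | _ => y end.

Fixpoint ppl_rec_fuel (fuel n : nat) : nat :=
  if fuel is f.+1 then
    ppl_step (n %% 4) (ppl_rec_fuel f (n %/ 4)) (ppl_rec_fuel f (n %/ 4).+1)
  else 0.

Definition ppl_rec (n : nat) : nat := ppl_rec_fuel n.+1 n.

Lemma ppl_rec_fuelS f n :
  ppl_rec_fuel f.+1 n =
    ppl_step (n %% 4) (ppl_rec_fuel f (n %/ 4)) (ppl_rec_fuel f (n %/ 4).+1).
Proof. by []. Qed.

Lemma ppl_rec_fuel0 f : ppl_rec_fuel f 0 = 0.
Proof. by elim: f. Qed.

Lemma eq_ppl_step r x1 x2 y1 y2 :
  x1 = x2 -> (1 < r -> y1 = y2) -> ppl_step r x1 y1 = ppl_step r x2 y2.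
Proof. by move=> -> eq_y; case: r eq_y => [|[|[|r]]] //= ->. Qed.

Lemma ppl_rec_fuel_irr f g n : n <= f -> n <= g -> ppl_rec_fuel f n = ppl_rec_fuel g n.
Proof.
elim: f g n => [|f IH] [|g] n //.
- by rewrite leqn0 => /eqP -> _; rewrite !ppl_rec_fuel0.
- by move=> _; rewrite leqn0 => /eqP ->; rewrite !ppl_rec_fuel0.
move=> le_nf le_ng; rewrite !ppl_rec_fuelS.
by apply: eq_ppl_step => [|r_gt1]; apply: IH; lia.
Qed.

Lemma ppl_rec_4 m r : r <= 4 -> ppl_rec (4 * m + r) = ppl_step r (ppl_rec m) (ppl_rec m.+1).
Proof.
have ppl_rec_lt4 k o : o < 4 -> ppl_rec (4 * k + o) = ppl_step o (ppl_rec k) (ppl_rec k.+1).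
  move=> lt_o; rewrite /ppl_rec ppl_rec_fuelS.
  have [-> ->] : (4 * k + o) %% 4 = o /\ (4 * k + o) %/ 4 = k by lia.
  by apply: eq_ppl_step => [|o_gt1]; apply: ppl_rec_fuel_irr; lia.
rewrite leq_eqVlt ltnS => /predU1P[-> | /ppl_rec_lt4 //].
by rewrite (_ : 4 * m + 4 = 4 * m.+1 + 0) ?ppl_rec_lt4 //; lia.
Qed.

Lemma ppl_rec_mul4 m : ppl_rec (4 * m) = ppl_rec m.
Proof. by rewrite -[4 * m]addn0 ppl_rec_4. Qed.

Lemma ppl_rec_step n : ppl_rec n.+1 <= (ppl_rec n).+1 /\ ppl_rec n <= (ppl_rec n.+1).+1.
Proof.
elim/ltn_ind: n => n IH.
have [m [r [lt_r def_n]]] := split_mod4 n; subst n.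
rewrite -addnS !ppl_rec_4 ?(ltnW lt_r) //.
case: r lt_r IH => [|[|[|[|]]]] //= _ IH; [lia | | | lia];
  by have [|IH1 IH2] := IH m; lia.
Qed.

Lemma ppl_rec_add3 a : 2 <= a %% 4 -> ppl_rec (a + 3) <= (ppl_rec a).+1.
Proof.
move=> a_mod4; have [q [r [lt_r def_a]]] := split_mod4 a; subst a.
have [-> | ->] : r = 2 \/ r = 3 by lia.
- have [step_q _] := ppl_rec_step q.
  by rewrite (_ : 4 * q + 2 + 3 = 4 * q.+1 + 1) ?ppl_rec_4 //=; lia.
- by rewrite (_ : 4 * q + 3 + 3 = 4 * q.+1 + 2) ?ppl_rec_4 //=; lia.
Qed.

Lemma ppl_step_mirror e x x' y' y : e < 4 -> y <= x.+1 -> y' <= x'.+1 ->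
  ppl_step (4 - e) y' y <= (ppl_step e x x').+1.
Proof. by case: e => [|[|[|[|]]]] //= _; lia. Qed.

Definition tm_pal (a b : nat) : Prop := forall j, a <= j < b -> tm j = tm (a + b - 1 - j).

Lemma tm_pal_shrink a b : tm_pal a b -> tm_pal a.+1 b.-1.
Proof. by move=> pal_ab j lt_j; rewrite pal_ab; [congr tm | ]; lia. Qed.

Lemma tm_pal_odd a b : a < b -> odd (b - a) -> tm_pal a b ->
  b = a.+1 \/ b = a + 3 /\ 2 <= a %% 4.
Proof.
move=> lt_ab odd_ba pal_ab.
have [le_ba3 | lt3_ba] := leqP (b - a) 3.
  have [-> | def_b] : b = a.+1 \/ b = a + 3 by lia.
    by left.
  by right; subst b; split=> //; apply: tm_eq_add2_mod4; rewrite pal_ab; [congr tm | ]; lia.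
exfalso; apply: (@tm_no_pal5 ((a + b - 1)./2 - 2)).
  by rewrite pal_ab; [congr tm | ]; lia.
by rewrite pal_ab; [congr tm | ]; lia.
Qed.

Lemma tm_pal_even a b : a < b -> ~~ odd (b - a) -> tm_pal a b -> (a + b) %% 4 = 0.
Proof.
move=> lt_ab even_ba pal_ab.
suff: odd ((a + b)./2).-1 by lia.
by apply: tm_eqS_odd; rewrite pal_ab; [congr tm | ]; lia.
Qed.

(* Position 4q + o of t lies in the image of letter q; since each tm_morph x
   is a palindrome, its mirror 4q' + (3 - o) carries the same offset. *)
Lemma tm_pal_desubst a b : a < b -> (a + b) %% 4 = 0 -> tm_pal a b ->
  tm_pal (a %/ 4) ((b + 3) %/ 4).
Proof.
move=> lt_ab ab_mod4 pal_ab q lt_q.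
have [o [lt_o def_j]] : exists o, o < 4 /\ maxn (4 * q) a = 4 * q + o.
  by exists (maxn (4 * q) a - 4 * q); split; lia.
have /pal_ab : a <= 4 * q + o < b by lia.
rewrite (_ : a + b - 1 - (4 * q + o) = 4 * (a %/ 4 + (b + 3) %/ 4 - 1 - q) + (3 - o));
  last by lia.
rewrite !tmE ?ltn_subrL //; last by lia.
by case: o lt_o {def_j} => [|[|[|[|]]]] //= _; case: (tm q); case: (tm _).
Qed.

Lemma ppl_rec_tm_pal a b : a <= b -> tm_pal a b -> ppl_rec b <= (ppl_rec a).+1.
Proof.
elim/ltn_ind: b a => b IH a; rewrite leq_eqVlt => /predU1P[-> _ | lt_ab pal_ab].
  exact: leqnSn.
have [odd_ba | even_ba] := boolP (odd (b - a)).
  have [-> | [-> a_mod4]] := tm_pal_odd lt_ab odd_ba pal_ab.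
    by have [] := ppl_rec_step a.
  exact: ppl_rec_add3.
have ab_mod4 := tm_pal_even lt_ab even_ba pal_ab.
have pal_AB := tm_pal_desubst lt_ab ab_mod4 pal_ab.
set A := a %/ 4 in pal_AB; set B := (b + 3) %/ 4 in pal_AB; set e := a %% 4.
have [def_a def_b lt_AB lt_Bb] : [/\ a = 4 * A + e, b = 4 * B.-1 + (4 - e), A < B & B < b].
  by rewrite /A /B /e; split; lia.
have le_BA : ppl_rec B <= (ppl_rec A).+1 by apply: IH => //; exact: ltnW.
have le_B'A' : ppl_rec B.-1 <= (ppl_rec A.+1).+1.
  have [le_A'B' | lt_B'A'] := leqP A.+1 B.-1.
    by apply: IH => //; [lia | exact: tm_pal_shrink].
  by rewrite (_ : B.-1 = A); [have [] := ppl_rec_step A | lia].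
rewrite def_a def_b !ppl_rec_4 ?leq_subr ?prednK; try lia.
exact: ppl_step_mirror (ltn_pmod a (isT : 0 < 4)) le_BA le_B'A'.
Qed.

Definition tm_factor (i n : nat) : seq bool := map tm (iota i (n - i)).

Lemma size_tm_factor i n : size (tm_factor i n) = n - i.
Proof. by rewrite size_map size_iota. Qed.

Lemma take_tm_factor i n j : j <= n - i -> take j (tm_factor i n) = tm_factor i (i + j).
Proof. by move=> le_j; rewrite -map_take take_iota; congr (map _ (iota _ _)); lia. Qed.

Lemma drop_tm_factor i n j : drop j (tm_factor i n) = tm_factor (i + j) n.
Proof. by rewrite -map_drop drop_iota; congr (map _ (iota _ _)); lia. Qed.

Lemma tm_pal_factor a b : palindrome (tm_factor a b) -> tm_pal a b.
Proof.
move=> /eqP pal_ab j /andP[le_aj lt_jb].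
have := congr1 (nth false ^~ (j - a)) pal_ab.
rewrite /= nth_rev size_tm_factor; last by lia.
rewrite !(nth_map 0) ?size_iota ?nth_iota; try lia.
rewrite (_ : a + (j - a) = j); last by lia.
by rewrite (_ : a + (b - a - (j - a).+1) = a + b - 1 - j) => [->|]; last lia.
Qed.

Lemma ppl_rec_le_factor k i n :
  i <= n -> pal_k k (tm_factor i n) -> ppl_rec n <= ppl_rec i + k.
Proof.
elim: k i => [|k IH] i le_in /=.
  by move/eqP/(congr1 size); rewrite size_tm_factor /= => ni0; rewrite (_ : n = i) //; lia.
case/existsP => j /andP[].
have lt_j : j < n - i by rewrite -size_tm_factor.
rewrite take_tm_factor // drop_tm_factor => /tm_pal_factor pal_j /IH le_rest.
have le_j : i + j.+1 <= n by lia.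
have := le_rest le_j; have := ppl_rec_tm_pal (leq_addr j.+1 i) pal_j; lia.
Qed.

Lemma PPLE n : PPL n = pal_length (tm_prefix n).
Proof. by []. Qed.

Lemma PPLS_le n : PPL n.+1 <= (PPL n).+1.
Proof. by rewrite (PPLE n.+1) (PPLE n) /tm_prefix mkseqS pal_length_rcons. Qed.

Lemma PPL_leS n : PPL n <= (PPL n.+1).+1.
Proof. by rewrite (PPLE n.+1) (PPLE n) /tm_prefix mkseqS pal_length_le_rcons. Qed.

Lemma PPL_mul4 m : PPL (4 * m) <= PPL m.
Proof. by rewrite (PPLE (4 * m)) (PPLE m) tm_prefix_mul4 pal_length_tm_subst. Qed.

(* Goals mentioning PPL are never closed by [//]: the attempt to close them
   by conversion would evaluate ex_minn. *)
Lemma PPL_le_ppl_rec n : PPL n <= ppl_rec n.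
Proof.
elim/ltn_ind: n => n IH.
have [m [r [lt_r def_n]]] := split_mod4 n; subst n.
rewrite ppl_rec_4; last exact: ltnW.
have PPL_mul4S : 1 < r -> PPL (4 * m.+1) <= ppl_rec m.+1.
  by move=> r_gt1; apply: leq_trans (PPL_mul4 _) (IH _ _); lia.
case: r lt_r IH PPL_mul4S => [|[|[|[|]]]] // _ IH PPL_mul4S; rewrite [ppl_step _ _ _]/=.
- case: m IH {PPL_mul4S} => [|m] IH; first by rewrite PPLE pal_length_nil.
  by rewrite addn0; apply: leq_trans (PPL_mul4 _) (IH _ _); lia.
- rewrite addn1; apply: leq_trans (PPLS_le _) _; rewrite ltnS -ppl_rec_mul4.
  by apply: IH; lia.
- rewrite -!minnSS leq_min; apply/andP; split.
    have le_4m1 : PPL (4 * m + 1) <= ppl_rec (4 * m + 1) by apply: IH; lia.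
    rewrite (@ppl_rec_4 m 1 isT) in le_4m1.
    by rewrite addnS; apply: leq_trans (PPLS_le _) _.
  apply: leq_trans (PPL_leS _) _; rewrite ltnS; apply: leq_trans (PPL_leS _) _.
  by rewrite ltnS (_ : (4 * m + 2).+2 = 4 * m.+1); [exact: PPL_mul4S | lia].
- apply: leq_trans (PPL_leS _) _; rewrite ltnS.
  by rewrite (_ : (4 * m + 3).+1 = 4 * m.+1); [exact: PPL_mul4S | lia].
Qed.

Lemma PPL_ppl_rec n : PPL n = ppl_rec n.
Proof.
apply/eqP; rewrite eqn_leq PPL_le_ppl_rec andTb.
have pal_n : pal_k (PPL n) (tm_factor 0 n).
  by rewrite /tm_factor subn0; apply: pal_length_spec.
exact: ppl_rec_le_factor (leq0n n) pal_n.
Qed.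

Local Open Scope ring_scope.

Lemma d_tE n : d_t n = (ppl_rec n.+1)%:Z - (ppl_rec n)%:Z.
Proof. by rewrite /d_t (PPL_ppl_rec n.+1) (PPL_ppl_rec n). Qed.

Lemma d_t_4 m r : (r < 4)%N -> d_t (4 * m + r) =
  (ppl_step r.+1 (ppl_rec m) (ppl_rec m.+1))%:Z - (ppl_step r (ppl_rec m) (ppl_rec m.+1))%:Z.
Proof. by move=> lt_r; rewrite d_tE -addnS !ppl_rec_4 // ltnW. Qed.

Lemma ppl_step_delta x y : (y <= x.+1)%N -> (x <= y.+1)%N ->
  [seq (ppl_step r.+1 x y)%:Z - (ppl_step r x y)%:Z | r <- iota 0 4] = delta (y%:Z - x%:Z).
Proof.
move=> le_yx le_xy.
have [-> | [-> | ->]] : y = x.+1 \/ y = x \/ x = y.+1 by lia.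
- by rewrite (_ : _ - _ = 1) /delta /=; [congr [:: _; _; _; _] | ]; lia.
- by rewrite subrr /delta /=; congr [:: _; _; _; _]; lia.
- by rewrite (_ : _ - _ = -1) /delta /=; [congr [:: _; _; _; _] | ]; lia.
Qed.

Lemma d_t_range n : d_t n \in [:: -1; 0; 1].
Proof.
rewrite d_tE; have [le1 le2] := ppl_rec_step n.
have [-> | [-> | ->]] : ppl_rec n.+1 = (ppl_rec n).+1 \/ ppl_rec n.+1 = ppl_rec n \/
    ppl_rec n = (ppl_rec n.+1).+1 by lia.
- by rewrite (_ : _ - _ = 1) ?inE //; lia.
- by rewrite subrr.
- by rewrite (_ : _ - _ = -1) ?inE //; lia.
Qed.

Lemma d_t_morph n :
  [:: d_t (4 * n); d_t (4 * n + 1); d_t (4 * n + 2); d_t (4 * n + 3)] = delta (d_t n).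
Proof.
rewrite -{1}[(4 * n)%N]addn0 !d_t_4 // d_tE.
by have [le1 le2] := ppl_rec_step n; exact: ppl_step_delta.
Qed.

Theorem corollary13 :
  (forall n : nat, d_t n \in [:: -1; 0; 1]) /\
  d_t 0 = 1 /\
  (forall n : nat,
     [:: d_t (4 * n); d_t (4 * n + 1); d_t (4 * n + 2); d_t (4 * n + 3)] = delta (d_t n)).
Proof. by split; [exact: d_t_range | split; [rewrite d_tE | exact: d_t_morph]]. Qed.
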